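(* The nested commutator $[\Delta_1^6,[\Delta_2^6,[\Delta_3^6,[\Delta_4^6,\Delta_5^6]]]]$ (where $[a,b]=aba^{-1}b^{-1}$) is a nontrivial element of $Br(\Sigma_2)\cap\ker(\rho)$: it lies in $Br(\Sigma_2)$, acts trivially on $H_1(\Sigma_2;\mathbb{Z}_3)$, and acts nontrivially on $H_1(\Sigma_2;\mathbb{Z})$.
   Context: $\Sigma_2$ is the closed orientable genus two surface with hyperelliptic involution $i$ and 2-fold branched covering $\pi\colon\Sigma_2\to S^2$ branched over $y_1,\dots,y_6$. $\Delta_1,\dots,\Delta_5$ are the standard generating Dehn twists of $M(\Sigma_2)$ along a chain of $i$-invariant simple closed curves $c_1,\dots,c_5$ (consecutive curves meeting once, non-consecutive disjoint), where $c_j$ projects to an arc joining $y_j$ and $y_{j+1}$; under the Birman–Hilden surjection $p\colon M(\Sigma_2)\to M(S^2,6)$ (kernel $\langle[i]\rangle$), $p(\Delta_j)=\sigma_j$, the half-twist exchanging $y_j$ and $y_{j+1}$. $M_p(S^2,n)$ is the group of isotopy classes fixing each marked point, $L_i$ the map forgetting $y_i$, $Br(S^2,6)=\bigcap_i\ker L_i$, $Br(\Sigma_2)=p^{-1}(Br(S^2,6))$, and $\rho\colon M(\Sigma_2)\to Sp(4,\mathbb{Z}_3)$ the action on $H_1(\Sigma_2;\mathbb{Z}_3)$. *)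

From mathcomp Require Import all_boot all_order all_algebra.
Set Implicit Arguments. Unset Strict Implicit. Unset Printing Implicit Defensive.
Import GRing.Theory.
Local Open Scope ring_scope.

(* Groups given by presentations.  A letter (j, false) is the generator j,  *)
(* (j, true) its inverse.  Words are read left to right as products        *)
(* (functional composition: the rightmost letter acts first).              *)
Definition letter (k : nat) := ('I_k * bool)%type.
Definition word (k : nat) := seq (letter k).

Definition inv_letter k (x : letter k) : letter k := (x.1, ~~ x.2).
Definition inv_word k (w : word k) : word k := rev (map (@inv_letter k) w).
Definition gen k (j : 'I_k) : word k := [:: (j, false)].
Definition pow_word k (w : word k) (n : nat) : word k := flatten (nseq n w).
Definition comm_word k (a b : word k) : word k :=
  a ++ b ++ inv_word a ++ inv_word b.

(* equality in the group < generators 'I_k | R >  (R a list of relations l = r) *)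
Inductive pres_eq (k : nat) (R : seq (word k * word k)) : word k -> word k -> Prop :=
| pe_refl w : pres_eq R w w
| pe_sym u v : pres_eq R u v -> pres_eq R v u
| pe_trans u v w : pres_eq R u v -> pres_eq R v w -> pres_eq R u w
| pe_free u v x : pres_eq R (u ++ x :: inv_letter x :: v) (u ++ v)
| pe_rel u v l r : (l, r) \in R -> pres_eq R (u ++ l ++ v) (u ++ r ++ v).

(* M(S^2, m+2): mapping class group of the sphere with m+2 marked points,  *)
(* generated by the half-twists sigma_1..sigma_{m+1} (here indexed by      *)
(* 'I_m.+1), with its standard presentation: braid relations,              *)
(* sigma_1...sigma_{m+1} sigma_{m+1}...sigma_1 = 1 and                     *)
(* (sigma_1 ... sigma_{m+1})^(m+2) = 1.                                   *)
(* the ordinals 0, 1, ..., n-1 in increasing order (computable variant of enum) *)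
Fixpoint ords (n : nat) : seq 'I_n :=
  match n with
  | 0 => [::]
  | n'.+1 => ord0 :: map (lift ord0) (ords n')
  end.

Definition chain_word (m : nat) : word m.+1 := [seq (j, false) | j <- ords m.+1].

Definition braid_rels (m : nat) : seq (word m.+1 * word m.+1) :=
  flatten [seq [seq ([:: (i, false); (j, false); (i, false)],
                     [:: (j, false); (i, false); (j, false)])
               | j <- ords m.+1 & (val j == (val i).+1)%N]
          | i <- ords m.+1]
  ++
  flatten [seq [seq ([:: (i, false); (j, false)], [:: (j, false); (i, false)])
               | j <- ords m.+1 & ((val i).+1 < val j)%N]
          | i <- ords m.+1].

Definition sphere_rels (m : nat) : seq (word m.+1 * word m.+1) :=
  braid_rels m ++
  [:: (chain_word m ++ rev (chain_word m), [::]);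
      (pow_word (chain_word m) m.+2%N, [::])].

Definition trivial_sphere (m : nat) (w : word m.+1) : Prop :=
  pres_eq (sphere_rels m) w [::].

(* M(Sigma_2): generated by Delta_1..Delta_5 (indexed by 'I_5), with the    *)
(* Birman-Hilden presentation (recorded for reference).                    *)
Definition Hword : word 5 := chain_word 4 ++ rev (chain_word 4).
Definition genus2_rels : seq (word 5 * word 5) :=
  braid_rels 4 ++
  [:: (pow_word (chain_word 4) 6%N, [::]); (pow_word Hword 2%N, [::])] ++
  [seq (Hword ++ gen j, gen j ++ Hword) | j <- ords 5].

(* Birman-Hilden map p : M(Sigma_2) -> M(S^2,6), Delta_j |-> sigma_j, on words. *)
Definition p_word (w : word 5) : word 5 := w.

(* sigma_j (0-indexed j) exchanges the marked points in positions j, j+1.   *)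
Fixpoint track (pos : nat) (w : word 5) : nat :=
  match w with
  | [::] => pos
  | (j, _) :: w' =>
      track (if pos == val j then (val j).+1
             else if pos == (val j).+1 then val j else pos) w'
  end.

Definition pure6 (w : word 5) : Prop := forall i : 'I_6, track i w = i.

(* L_i on words: delete the strand starting (and, for pure words, ending)   *)
(* at the marked point in position pos, renumbering the remaining points.   *)
(* the element min(k,3) of 'I_4 (computable) *)
Definition ord4 (k : nat) : 'I_4 :=
  match k with
  | 0 => @Ordinal 4 0 isT
  | 1 => @Ordinal 4 1 isT
  | 2 => @Ordinal 4 2 isT
  | _ => @Ordinal 4 3 isT
  end.

Fixpoint forget_aux (pos : nat) (w : word 5) : word 4 :=
  match w with
  | [::] => [::]
  | (j, b) :: w' =>
      if pos == val j then forget_aux (val j).+1 w'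
      else if pos == (val j).+1 then forget_aux (val j) w'
      else (ord4 (if (val j < pos)%N then val j else (val j).-1), b)
             :: forget_aux pos w'
  end.
Definition L (i : 'I_6) (w : word 5) : word 4 := forget_aux i w.

(* Br(S^2,6) = intersection of the kernels of the L_i (inside M_p(S^2,6)). *)
Definition in_Br_S2_6 (w : word 5) : Prop :=
  pure6 w /\ forall i : 'I_6, @trivial_sphere 3%N (L i w).

Definition in_Br_Sigma2 (w : word 5) : Prop := in_Br_S2_6 (p_word w).

(* Action on H_1(Sigma_2; Z) = Z^4, symplectic basis (a1,b1,a2,b2) with     *)
(* <a_i,b_i> = 1.  Homology classes of the chain c_1..c_5:                  *)
(* c1 = b1, c2 = a1, c3 = b1 - b2, c4 = a2, c5 = b2.                        *)
(* A Dehn twist about c acts by the transvection x |-> x + <x,c> c          *)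
(* (Picard-Lefschetz formula), on column vectors.                           *)
Definition Jform : 'M[int]_4 :=
  \matrix_(i < 4, j < 4)
    (if ((val i == 0) && (val j == 1))%N || ((val i == 2) && (val j == 3))%N then 1
     else if ((val i == 1) && (val j == 0))%N || ((val i == 3) && (val j == 2))%N then -1
     else 0).

Definition chain_class (j : 'I_5) : 'cV[int]_4 :=
  \col_(i < 4)
    (match val j, val i with
     | 0%N, 1%N => 1
     | 1%N, 0%N => 1
     | 2%N, 1%N => 1
     | 2%N, 3%N => -1
     | 3%N, 2%N => 1
     | 4%N, 3%N => 1
     | _, _ => 0
     end : int).

(* <x, c> = x^T J c ;                                                      *)
(* T_c x = x + (x^T J c) c = x + c (c^T J^T x).                            *)
Definition transvection (c : 'cV[int]_4) : 'M[int]_4 :=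
  1%:M + c *m (c^T *m Jform^T).
Definition transvection_inv (c : 'cV[int]_4) : 'M[int]_4 :=
  1%:M - c *m (c^T *m Jform^T).

Definition rho_letter (x : letter 5) : 'M[int]_4 :=
  if x.2 then transvection_inv (chain_class x.1) else transvection (chain_class x.1).

Definition rhoZ (w : word 5) : 'M[int]_4 :=
  foldr (fun x M => rho_letter x *m M) 1%:M w.

Definition rho3 (w : word 5) : 'M['Z_3]_4 :=
  map_mx (fun z : int => z%:~R) (rhoZ w).

Definition D6 (j : 'I_5) : word 5 := pow_word (gen j) 6%N.
Definition nested_comm : word 5 :=
  comm_word (D6 (@Ordinal 5 0 isT)) (comm_word (D6 (@Ordinal 5 1 isT))
    (comm_word (D6 (@Ordinal 5 2 isT))
      (comm_word (D6 (@Ordinal 5 3 isT)) (D6 (@Ordinal 5 4 isT))))).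

(* Each Delta_j^6 is pure, and forgetting the marked point y_i deletes every
   letter of the Delta_j^6 with y_i an endpoint of c_j; a nested commutator with
   an empty entry reduces freely to the empty word, so every L_i of the element
   is trivial already in the free group.
   On homology a Dehn twist acts as a transvection 1 + N with N^2 = 0 (the
   intersection form is alternating), so Delta_j^6 acts as 1 + 6N, which is the
   identity mod 3; hence every commutator whose first entry is a Delta_j^6 lies
   in ker rho.  Nontriviality over Z is an exact integer computation. *)

From Stdlib Require Import ZArith.
From mathcomp Require Import all_boot all_order all_algebra.
From mathcomp Require Import ssrZ.

Set Implicit Arguments.
Unset Strict Implicit.
Unset Printing Implicit Defensive.
Import GRing.Theory Num.Theory.
Local Open Scope ring_scope.

Section FreeReduction.
Variables (k : nat) (R : seq (word k * word k)).

Lemma pres_eq_cons x u v : pres_eq R u v -> pres_eq R (x :: u) (x :: v).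
Proof.
elim=> [w | {}u {}v _ IH | {}u {}v w _ IHuv _ IHvw | {}u {}v y | {}u {}v l r lr].
- exact: pe_refl.
- exact: pe_sym.
- exact: pe_trans IHuv IHvw.
- exact: pe_free R (x :: u) v y.
- exact: (@pe_rel _ _ (x :: u) v l r lr).
Qed.

Definition freduce (w : word k) : word k :=
  foldr (fun x s => if s is y :: s' then if y == inv_letter x then s' else x :: s
                    else [:: x]) [::] w.

Lemma pres_eq_freduce w : pres_eq R w (freduce w).
Proof.
elim: w => [|x w IH]; first exact: pe_refl.
apply: pe_trans (pres_eq_cons x IH) _ => /=; rewrite -/(freduce w).
case: (freduce w) => [|y s]; first exact: pe_refl.
case: eqP => [-> | _]; [exact: pe_free R [::] s x | exact: pe_refl].
Qed.

Lemma pres_eq_freduce_nil w : freduce w = [::] -> pres_eq R w [::].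
Proof. by move=> <-; apply: pres_eq_freduce. Qed.

End FreeReduction.

Lemma nested_comm_in_Br : in_Br_Sigma2 nested_comm.
Proof.
split=> [|i].
  by case=> -[|[|[|[|[|[|i]]]]]] //; vm_compute.
apply: pres_eq_freduce_nil.
by case: i => -[|[|[|[|[|[|i]]]]]] //; vm_compute.
Qed.

Lemma expr1D_sqr0 (R : pzRingType) (N : R) n : N * N = 0 -> (1 + N) ^+ n = 1 + N *+ n.
Proof.
move=> NN0; elim: n => [|n IH]; first by rewrite expr0 mulr0n addr0.
by rewrite exprS IH mulrDl mul1r mulrDr mulr1 mulrnAr NN0 mul0rn addr0 mulrSr addrA.
Qed.

Lemma skew_form_self (R : numDomainType) n (A : 'M[R]_n) (x : 'cV[R]_n) :
  A^T = - A -> x^T *m A *m x = 0.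
Proof.
move=> skewA; set s := x^T *m A *m x.
have sT : s^T = s by apply/matrixP => i j; rewrite !ord1 mxE.
have sN : s^T = - s by rewrite /s !trmx_mul trmxK skewA mulNmx mulmxN mulmxA.
have s2 : s *+ 2 = 0 by rewrite mulr2n -{1}sT sN addNr.
apply/matrixP => i j; apply/eqP; move/matrixP/(_ i j)/eqP: s2.
by rewrite mulmxnE !mxE mulrn_eq0.
Qed.

Lemma Jform_skew : Jform^T = - Jform.
Proof.
by apply/matrixP => i j; rewrite !mxE; case: i => [[|[|[|[|?]]]] ?]; case: j => [[|[|[|[|?]]]] ?].
Qed.

Definition transvection_nil (c : 'cV[int]_4) : 'M[int]_4 := c *m (c^T *m Jform^T).

Lemma transvection_nil_sqr c : transvection_nil c *m transvection_nil c = 0.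
Proof.
have JTskew : Jform^T^T = - Jform^T by rewrite trmxK Jform_skew opprK.
rewrite /transvection_nil -mulmxA (mulmxA (c^T *m _)) (skew_form_self c JTskew).
by rewrite mul0mx mulmx0.
Qed.

Lemma transvection_invK c : transvection_inv c *m transvection c = 1%:M.
Proof.
rewrite /transvection_inv /transvection -/(transvection_nil c).
by rewrite mulmxDr !mulmxBl !mul1mx mulmx1 transvection_nil_sqr subr0 subrK.
Qed.

Lemma transvectionK c : transvection c *m transvection_inv c = 1%:M.
Proof.
rewrite /transvection_inv /transvection -/(transvection_nil c).
by rewrite mulmxBr !mulmxDl !mul1mx mulmx1 transvection_nil_sqr addr0 addrK.
Qed.

Lemma rho_letter_invK x : rho_letter (inv_letter x) *m rho_letter x = 1%:M.
Proof.
case: x => j [|]; rewrite /rho_letter /=.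
- exact: transvectionK.
- exact: transvection_invK.
Qed.

Lemma rhoZ_cat u v : rhoZ (u ++ v) = rhoZ u *m rhoZ v.
Proof. by elim: u => [|x u IH] /=; rewrite ?mul1mx // IH mulmxA. Qed.

Lemma rhoZ_inv_wordK w : rhoZ (inv_word w) *m rhoZ w = 1%:M.
Proof.
elim: w => [|x w IH]; first by rewrite mul1mx.
rewrite /inv_word map_cons rev_cons -cats1 rhoZ_cat /= mulmx1 -/(inv_word w).
by rewrite -mulmxA (mulmxA (rho_letter _)) rho_letter_invK mul1mx.
Qed.

Lemma rhoZ_pow w n : rhoZ (pow_word w n) = rhoZ w ^+ n.
Proof. by elim: n => [|n IH] //; rewrite exprS -mulmxE -IH -rhoZ_cat. Qed.

Lemma rhoZ_D6 j : rhoZ (D6 j) = 1%:M + transvection_nil (chain_class j) *+ 6.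
Proof.
rewrite /D6 rhoZ_pow /= mulmx1 /rho_letter /= /transvection -/(transvection_nil _).
by rewrite expr1D_sqr0 // -mulmxE transvection_nil_sqr.
Qed.

Lemma rho3_cat u v : rho3 (u ++ v) = rho3 u *m rho3 v.
Proof. by rewrite /rho3 rhoZ_cat map_mxM. Qed.

Lemma rho3_D6 j : rho3 (D6 j) = 1%:M.
Proof.
rewrite /rho3 rhoZ_D6 map_mxD map_mx1 -[RHS]addr0; congr (_ + _).
apply/matrixP => i k; rewrite mxE mulmxnE raddfMn -mulr_natr.
by rewrite (natrM _ 3 2) pchar_Zp // mul0r mulr0 mxE.
Qed.

Lemma rho3_inv_wordK w : rho3 (inv_word w) *m rho3 w = 1%:M.
Proof. by rewrite -map_mxM rhoZ_inv_wordK map_mx1. Qed.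

Lemma rho3_comm_word a b : rho3 a = 1%:M -> rho3 (comm_word a b) = 1%:M.
Proof.
move=> rho3a; have rho3a' : rho3 (inv_word a) = 1%:M.
  by rewrite -[LHS]mulmx1 -rho3a rho3_inv_wordK.
rewrite /comm_word !rho3_cat rho3a rho3a' !mul1mx.
exact: mulmx1C (rho3_inv_wordK b).
Qed.

(* MathComp matrices are locked and do not reduce under vm_compute, so rhoZ is
   evaluated on row lists of binary integers and transported back by int_of_Z. *)
Definition zmx := seq (seq Z).

Definition zentry (A : zmx) (i j : nat) : Z := nth 0 (nth [::] A i) j.

Definition zmx_of_fun n (f : nat -> nat -> Z) : zmx := mkseq (fun i => mkseq (f i) n) n.

Definition mx_of_zmx n (A : zmx) : 'M[int]_n := \matrix_(i, j) int_of_Z (zentry A i j).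

Definition zsum (s : seq Z) : Z := foldr +%R 0 s.

Definition zmul n (A B : zmx) : zmx :=
  zmx_of_fun n (fun i j => zsum [seq zentry A i k * zentry B k j | k <- index_iota 0 n]).

Definition zid n : zmx := zmx_of_fun n (fun i j => (i == j)%:R).

Lemma mx_of_zmx_of_fun n f : mx_of_zmx n (zmx_of_fun n f) = \matrix_(i, j) int_of_Z (f i j).
Proof. by apply/matrixP => i j; rewrite !mxE /zentry !nth_mkseq. Qed.

Lemma mx_of_zmxM n A B : mx_of_zmx n (zmul n A B) = mx_of_zmx n A *m mx_of_zmx n B.
Proof.
apply/matrixP => i j; rewrite mx_of_zmx_of_fun !mxE /zsum foldrE rmorph_sum big_map.
by rewrite big_mkord; apply: eq_bigr => k _; rewrite rmorphM !mxE.
Qed.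

Lemma mx_of_zid n : mx_of_zmx n (zid n) = 1%:M.
Proof. by apply/matrixP => i j; rewrite mx_of_zmx_of_fun !mxE rmorph_nat. Qed.

Definition zJ (i j : nat) : Z :=
  match i, j with
  | 0%N, 1%N | 2%N, 3%N => 1
  | 1%N, 0%N | 3%N, 2%N => -1
  | _, _ => 0
  end.

Definition zchain (j i : nat) : Z :=
  match j, i with
  | 0%N, 1%N | 1%N, 0%N | 2%N, 1%N | 3%N, 2%N | 4%N, 3%N => 1
  | 2%N, 3%N => -1
  | _, _ => 0
  end.

Lemma JformE i j : Jform i j = int_of_Z (zJ i j).
Proof. by rewrite mxE; case: i => [[|[|[|[|?]]]] ?]; case: j => [[|[|[|[|?]]]] ?]. Qed.

Lemma chain_classE j i : chain_class j i 0 = int_of_Z (zchain j i).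
Proof. by rewrite mxE; case: j => [[|[|[|[|[|?]]]]] ?]; case: i => [[|[|[|[|?]]]] ?]. Qed.

Lemma rho_letterE x : rho_letter x = 1%:M + (-1) ^+ x.2 *: transvection_nil (chain_class x.1).
Proof. by case: x => j [|]; rewrite /rho_letter ?scaleN1r ?scale1r. Qed.

Lemma rho_letter_entry x i j : rho_letter x i j =
  (i == j)%:R + (-1) ^+ x.2 * (chain_class x.1 i 0 * \sum_k chain_class x.1 k 0 * Jform j k).
Proof.
rewrite rho_letterE !mxE big_ord1 !mxE; congr (_ + _ * (_ * _)).
by apply: eq_bigr => k _; rewrite !mxE.
Qed.

Definition zletter (x : letter 5) : zmx :=
  zmx_of_fun 4 (fun i j => (i == j)%:R +
    (-1) ^+ x.2 * (zchain x.1 i * zsum [seq zchain x.1 k * zJ j k | k <- index_iota 0 4])).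

Lemma rho_letter_zmx x : rho_letter x = mx_of_zmx 4 (zletter x).
Proof.
apply/matrixP => i j; rewrite rho_letter_entry mx_of_zmx_of_fun mxE.
rewrite /zsum foldrE rmorphD rmorph_nat !rmorphM rmorph_sign rmorph_sum big_map big_mkord.
rewrite chain_classE; congr (_ + _ * (_ * _)); apply: eq_bigr => k _.
by rewrite rmorphM chain_classE JformE.
Qed.

Definition zrho (w : word 5) : zmx := foldr (fun x A => zmul 4 (zletter x) A) (zid 4) w.

Lemma rhoZ_zmx w : rhoZ w = mx_of_zmx 4 (zrho w).
Proof.
elim: w => [|x w IH] /=; first by rewrite mx_of_zid.
by rewrite IH rho_letter_zmx mx_of_zmxM.
Qed.

Lemma zrho_nested_comm_01 : zentry (zrho nested_comm) 0 1 != 0.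
Proof. by vm_compute. Qed.

Lemma rhoZ_nested_comm_neq1 : rhoZ nested_comm != 1%:M.
Proof.
rewrite rhoZ_zmx; apply: contraNneq zrho_nested_comm_01 => /matrixP/(_ 0 1).
by rewrite !mxE mulr0n -(rmorph0 int_of_Z) => /(can_inj int_of_ZK) ->.
Qed.

Theorem mainTheorem12 :
  in_Br_Sigma2 nested_comm /\
  rho3 nested_comm = 1%:M /\
  rhoZ nested_comm != 1%:M.
Proof.
split; first exact: nested_comm_in_Br.
split; first exact: rho3_comm_word (rho3_D6 _).
exact: rhoZ_nested_comm_neq1.
Qed.
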